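(* Let $\mathcal{Q}\subseteq\Delta_{N\times M}$ be a nonempty compact convex set consisting only of weakly symmetric channels. Then the robust capacity equals $$\sup_{p\in\Delta_N}\inf_{Q\in\mathcal{Q}}I(p,Q)=\min_{Q\in\mathcal{Q}}\left[\log N+\sum_{m=1}^M Q_{1m}\log\frac{Q_{1m}}{\sum_{l=1}^N Q_{lm}}\right],$$ i.e. the upper bound $\min_{Q\in\mathcal{Q}}\left[\log N+\max_{n}\sum_{m} Q_{nm}\log\frac{Q_{nm}}{\sum_{l} Q_{lm}}\right]$ is attained.
   Context: $\Delta_N$ is the probability simplex in $\mathbb{R}^N$; $\Delta_{N\times M}$ is the set of $N\times M$ nonnegative matrices with each row summing to $1$. $I(p,Q)=\sum_{n,m}p_nQ_{nm}\log\frac{Q_{nm}}{\sum_l p_lQ_{lm}}$, with terms where $p_nQ_{nm}=0$ equal to zero and $0\log 0=0$. A channel $Q\in\Delta_{N\times M}$ is weakly symmetric if every row of $Q$ is a permutation of every other row and all column sums $\sum_{l=1}^N Q_{lm}$, $m=1,\dots,M$, are equal (hence equal to $N/M$). *)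

From Stdlib Require Import Reals Lra Lia List Permutation.
Open Scope R_scope.

Fixpoint rsum (n : nat) (f : nat -> R) : R :=
  match n with O => 0 | S k => rsum k f + f k end.

(* vectors/matrices are functions on nat; only indices n < N, m < M matter.
   Index 0 plays the role of the paper's index 1. *)
Definition simplex (N : nat) (p : nat -> R) : Prop :=
  (forall n, (n < N)%nat -> 0 <= p n) /\ rsum N p = 1.

Definition channel (N M : nat) (Q : nat -> nat -> R) : Prop :=
  (forall n m, (n < N)%nat -> (m < M)%nat -> 0 <= Q n m) /\
  (forall n, (n < N)%nat -> rsum M (fun m => Q n m) = 1).

Definition colsum (N : nat) (Q : nat -> nat -> R) (m : nat) : R :=
  rsum N (fun l => Q l m).

Definition weakly_symmetric (N M : nat) (Q : nat -> nat -> R) : Prop :=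
  (forall n1 n2, (n1 < N)%nat -> (n2 < N)%nat ->
     Permutation (map (Q n1) (seq 0 M)) (map (Q n2) (seq 0 M))) /\
  (forall m1 m2, (m1 < M)%nat -> (m2 < M)%nat -> colsum N Q m1 = colsum N Q m2).

Definition mutual_info (N M : nat) (p : nat -> R) (Q : nat -> nat -> R) : R :=
  rsum N (fun n => rsum M (fun m =>
    if Req_dec_T (p n * Q n m) 0 then 0
    else p n * Q n m * ln (Q n m / rsum N (fun l => p l * Q l m)))).

Definition sym_bound (N M : nat) (Q : nat -> nat -> R) : R :=
  ln (INR N) + rsum M (fun m =>
    if Req_dec_T (Q 0%nat m) 0 then 0
    else Q 0%nat m * ln (Q 0%nat m / colsum N Q m)).

Definition convex_set (Qs : (nat -> nat -> R) -> Prop) : Prop :=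
  forall Q1 Q2 t, Qs Q1 -> Qs Q2 -> 0 <= t <= 1 ->
    Qs (fun n m => t * Q1 n m + (1 - t) * Q2 n m).

(* compactness in R^{N x M} (finite-dimensional), stated as sequential
   compactness w.r.t. entrywise convergence on the index range *)
Definition compact_set (N M : nat) (Qs : (nat -> nat -> R) -> Prop) : Prop :=
  forall Qk : nat -> nat -> nat -> R, (forall k, Qs (Qk k)) ->
    exists phi : nat -> nat, (forall k, (phi k < phi (S k))%nat) /\
    exists Q, Qs Q /\
      forall n m, (n < N)%nat -> (m < M)%nat ->
        Un_cv (fun k => Qk (phi k) n m) (Q n m).

Definition is_inf (S : R -> Prop) (x : R) : Prop :=
  (forall y, S y -> x <= y) /\ (forall z, (forall y, S y -> z <= y) -> z <= x).

Definition is_sup (S : R -> Prop) (x : R) : Prop :=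
  (forall y, S y -> y <= x) /\ (forall z, (forall y, S y -> y <= z) -> x <= z).

Definition robust_values (N M : nat) (Qs : (nat -> nat -> R) -> Prop) (c : R) : Prop :=
  exists p, simplex N p /\
    is_inf (fun v => exists Q, Qs Q /\ v = mutual_info N M p Q) c.

From Stdlib Require Import Reals List Permutation Lra Lia ClassicalEpsilon Classical.
Open Scope R_scope.

(* For a weakly symmetric channel every column sums to N/M, so the output of
   the uniform input is uniform and I(uniform, Q) = log M - H(row of Q), which
   is the quantity [sym_bound N M Q].  Gibbs' inequality (ln x <= x - 1) shows
   that no input does better, hence I(p, Q) <= sym_bound N M Q for all p.
   The robust capacity is therefore attained at the uniform input, and it
   equals the minimum of [sym_bound] over the compact set, which exists because
   x ln x is continuous on [0, oo). *)

Lemma rsum_ext n f g :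
  (forall i, (i < n)%nat -> f i = g i) -> rsum n f = rsum n g.
Proof.
  revert f g; induction n as [|n IH]; intros f g H; simpl; [reflexivity|].
  rewrite (IH f g), H by (lia || (intros; apply H; lia)). reflexivity.
Qed.

Lemma rsum_le n f g :
  (forall i, (i < n)%nat -> f i <= g i) -> rsum n f <= rsum n g.
Proof.
  revert f g; induction n as [|n IH]; intros f g H; simpl; [lra|].
  pose proof (IH f g ltac:(intros; apply H; lia)). pose proof (H n ltac:(lia)). lra.
Qed.

Lemma rsum_plus n f g : rsum n (fun i => f i + g i) = rsum n f + rsum n g.
Proof. induction n as [|n IH]; simpl; [ring|]. rewrite IH. ring. Qed.

Lemma rsum_minus n f g : rsum n (fun i => f i - g i) = rsum n f - rsum n g.
Proof. induction n as [|n IH]; simpl; [ring|]. rewrite IH. ring. Qed.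

Lemma rsum_scal n c f : rsum n (fun i => c * f i) = c * rsum n f.
Proof. induction n as [|n IH]; simpl; [ring|]. rewrite IH. ring. Qed.

Lemma rsum_const n c : rsum n (fun _ => c) = INR n * c.
Proof. induction n as [|n IH]; [simpl; ring|]. rewrite S_INR. simpl. rewrite IH. ring. Qed.

Lemma rsum_comm n m (f : nat -> nat -> R) :
  rsum n (fun i => rsum m (fun j => f i j)) = rsum m (fun j => rsum n (fun i => f i j)).
Proof.
  induction n as [|n IH]; simpl.
  - rewrite rsum_const. ring.
  - rewrite IH, <- rsum_plus. reflexivity.
Qed.

Lemma rsum_nonneg n f : (forall i, (i < n)%nat -> 0 <= f i) -> 0 <= rsum n f.
Proof.
  intros H. replace 0 with (rsum n (fun _ => 0)) by (rewrite rsum_const; ring).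
  apply rsum_le; auto.
Qed.

Lemma rsum_term_le n f k :
  (forall i, (i < n)%nat -> 0 <= f i) -> (k < n)%nat -> f k <= rsum n f.
Proof.
  revert f; induction n as [|n IH]; intros f H Hk; [lia|]. simpl.
  pose proof (H n ltac:(lia)).
  destruct (Nat.eq_dec k n) as [->|Hkn].
  - pose proof (rsum_nonneg n f ltac:(intros; apply H; lia)). lra.
  - pose proof (IH f ltac:(intros; apply H; lia) ltac:(lia)). lra.
Qed.

Lemma rsum_fold_right n f : rsum n f = fold_right Rplus 0 (map f (seq 0 n)).
Proof.
  induction n as [|n IH]; [reflexivity|].
  rewrite seq_S, map_app, fold_right_app. simpl. rewrite IH.
  generalize (map f (seq 0 n)). intros l; induction l as [|x l IHl]; simpl; lra.
Qed.

Lemma rsum_perm n (r1 r2 : nat -> R) (f : R -> R) :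
  Permutation (map r1 (seq 0 n)) (map r2 (seq 0 n)) ->
  rsum n (fun i => f (r1 i)) = rsum n (fun i => f (r2 i)).
Proof.
  intros Hperm. rewrite !rsum_fold_right, <- (map_map r1 f), <- (map_map r2 f).
  apply (Permutation_map f) in Hperm.
  induction Hperm; simpl; lra.
Qed.

Lemma cv_const c : Un_cv (fun _ => c) c.
Proof. intros eps Heps. exists 0%nat. intros. unfold R_dist. rewrite Rminus_diag, Rabs_R0. lra. Qed.

Lemma rsum_cv n (a : nat -> nat -> R) (l : nat -> R) :
  (forall i, (i < n)%nat -> Un_cv (fun k => a k i) (l i)) ->
  Un_cv (fun k => rsum n (a k)) (rsum n l).
Proof.
  induction n as [|n IH]; intros H; simpl.
  - apply cv_const.
  - apply CV_plus; [apply IH; intros|]; apply H; lia.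
Qed.

Lemma ln_le_sub1 x : 0 < x -> ln x <= x - 1.
Proof. intros Hx. pose proof (exp_ineq1_le (ln x)). rewrite exp_ln in H; lra. Qed.

Lemma mul_ln_div x c : 0 <= x -> 0 < c -> x * ln (x / c) = x * ln x - x * ln c.
Proof.
  intros Hx Hc. destruct (Req_dec x 0) as [->|Hx0]; [ring|].
  unfold Rdiv. rewrite ln_mult, ln_Rinv by (try apply Rinv_0_lt_compat; lra). ring.
Qed.

(* The [if] guarding [0 log 0] in [mutual_info] and [sym_bound] is redundant. *)
Lemma guarded_mul_ln a b : (if Req_dec_T a 0 then 0 else a * ln b) = a * ln b.
Proof. destruct (Req_dec_T a 0) as [->|]; [ring|reflexivity]. Qed.

Lemma gibbs_term p q r c :
  0 <= p -> 0 <= q -> p * q <= r -> 0 < c ->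
  p * q * (ln (q / r) - ln c - ln q) <= p * q * (/ (c * r) - 1).
Proof.
  intros Hp Hq Hr Hc. destruct (Req_dec (p * q) 0) as [->|Hpq]; [lra|].
  assert (0 < p * q) by (pose proof (Rmult_le_pos p q Hp Hq); lra).
  assert (0 < q) by (destruct Hq as [|<-]; [assumption|lra]).
  assert (0 < c * r) by (apply Rmult_lt_0_compat; lra).
  assert (0 < / (c * r)) by (apply Rinv_0_lt_compat; lra).
  replace (ln (q / r) - ln c - ln q) with (ln (/ (c * r))).
  - apply Rmult_le_compat_l, ln_le_sub1; lra.
  - unfold Rdiv. rewrite ln_Rinv, !ln_mult, ln_Rinv by (try apply Rinv_0_lt_compat; lra). ring.
Qed.

Lemma xlnx_ge_m1 x : 0 <= x -> -1 <= x * ln x.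
Proof.
  intros [Hx|<-]; [|lra].
  pose proof (ln_le_sub1 (/ x) ltac:(apply Rinv_0_lt_compat; lra)) as Hln.
  rewrite ln_Rinv in Hln by lra.
  assert (x * (1 - / x) <= x * ln x) by (apply Rmult_le_compat_l; lra).
  replace (x * (1 - / x)) with (x - 1) in * by (field; lra). lra.
Qed.

Lemma xlnx_small x : 0 < x < 1 -> Rabs (x * ln x) <= 2 * sqrt x.
Proof.
  intros Hx. set (s := sqrt x).
  assert (Hs : 0 < s) by (apply sqrt_lt_R0; lra).
  assert (Hss : x = s * s) by (symmetry; apply sqrt_sqrt; lra).
  assert (ln x < 0) by (rewrite <- ln_1; apply ln_increasing; lra).
  pose proof (xlnx_ge_m1 s ltac:(lra)).
  assert (x * ln x = 2 * s * (s * ln s)) by (rewrite Hss, ln_mult by lra; ring).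
  rewrite Rabs_left by nra. nra.
Qed.

Lemma xlnx_cv u x :
  (forall k, 0 <= u k) -> 0 <= x -> Un_cv u x ->
  Un_cv (fun k => u k * ln (u k)) (x * ln x).
Proof.
  intros Hu [Hx|<-] Hcv.
  - apply (continuity_seq (fun y => y * ln y)); [|exact Hcv].
    apply continuity_pt_mult; apply derivable_continuous_pt.
    + apply derivable_pt_id.
    + exists (/ x). apply derivable_pt_lim_ln; lra.
  - (* at 0 we use x ln x = O(sqrt x) *)
    pose proof (continuity_seq sqrt u 0 (continuity_pt_sqrt 0 (Rle_refl 0)) Hcv) as Hsq.
    rewrite sqrt_0 in Hsq.
    intros eps Heps. destruct (Hsq (Rmin 1 (eps / 2)) ltac:(apply Rmin_pos; lra)) as [K HK].
    exists K. intros k Hk. specialize (HK k Hk). unfold R_dist in *.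
    rewrite Rmult_0_l, !Rminus_0_r in *.
    pose proof (sqrt_pos (u k)). rewrite Rabs_right in HK by lra.
    pose proof (Rmin_l 1 (eps / 2)). pose proof (Rmin_r 1 (eps / 2)).
    destruct (Hu k) as [Hpos|<-]; [|rewrite Rmult_0_l, Rabs_R0; lra].
    assert (u k < 1) by (rewrite <- (sqrt_sqrt (u k)) by lra; nra).
    pose proof (xlnx_small (u k) ltac:(lra)). lra.
Qed.

Lemma subseq_ge (phi : nat -> nat) :
  (forall k, (phi k < phi (S k))%nat) -> forall k, (k <= phi k)%nat.
Proof. intros H k. induction k as [|k IH]; [lia|]. specialize (H k). lia. Qed.

Section CompactMinimum.

Variables (N M : nat) (Qs : (nat -> nat -> R) -> Prop) (G : (nat -> nat -> R) -> R).

Definition seq_continuous_on : Prop :=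
  forall (Qk : nat -> nat -> nat -> R) Q, (forall k, Qs (Qk k)) -> Qs Q ->
    (forall n m, (n < N)%nat -> (m < M)%nat -> Un_cv (fun k => Qk k n m) (Q n m)) ->
    Un_cv (fun k => G (Qk k)) (G Q).

Hypothesis Qs_ne : exists Q, Qs Q.
Hypothesis Qs_compact : compact_set N M Qs.
Hypothesis G_cont : seq_continuous_on.
Hypothesis G_lb : exists b, forall Q, Qs Q -> b <= G Q.

Lemma inf_exists : exists s, (forall Q, Qs Q -> s <= G Q) /\
  forall k, exists Q, Qs Q /\ G Q < s + RinvN k.
Proof.
  destruct Qs_ne as [Q0 HQ0], G_lb as [b Hb].
  set (E := fun y => exists Q, Qs Q /\ y = - G Q).
  assert (HE : bound E) by (exists (- b); intros y [Q [HQ ->]]; specialize (Hb Q HQ); lra).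
  destruct (completeness E HE (ex_intro _ _ (ex_intro _ Q0 (conj HQ0 eq_refl))))
    as [t [Hub Hlub]].
  exists (- t). split.
  - intros Q HQ. assert (- G Q <= t) by (apply Hub; exists Q; auto). lra.
  - intros k. pose proof (cond_pos (RinvN k)).
    apply NNPP. intros Hno.
    assert (t <= t - RinvN k); [|lra].
    apply Hlub. intros y [Q [HQ ->]].
    destruct (Rlt_le_dec (G Q) (- t + RinvN k)); [|lra].
    exfalso. apply Hno. exists Q; auto.
Qed.

Lemma compact_min_attained : exists Qstar, Qs Qstar /\ forall Q, Qs Q -> G Qstar <= G Q.
Proof.
  destruct inf_exists as [s [Hs Happ]].
  apply choice in Happ as [Qk HQk].
  destruct (Qs_compact Qk (fun k => proj1 (HQk k))) as [phi [Hphi [Qstar [HQstar Hcv]]]].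
  exists Qstar. split; [exact HQstar|].
  assert (G Qstar <= s + 0); [|intros Q HQ; specialize (Hs Q HQ); lra].
  apply (Rle_cv_lim (Un := fun k => G (Qk (phi k))) (Vn := fun k => s + RinvN k)).
  - intros k. destruct (HQk (phi k)) as [_ Hlt]. simpl in *.
    pose proof (subseq_ge phi Hphi k).
    enough (/ (INR (phi k) + 1) <= / (INR k + 1)) by lra.
    apply Rinv_le_contravar; [pose proof (pos_INR k); lra|].
    apply Rplus_le_compat_r, le_INR; lia.
  - apply G_cont; auto. intros k; apply HQk.
  - apply CV_plus; [apply cv_const | exact RinvN_cv].
Qed.

End CompactMinimum.

Definition ws_capacity (M : nat) (Q : nat -> nat -> R) : R :=
  ln (INR M) + rsum M (fun m => Q 0%nat m * ln (Q 0%nat m)).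

Definition uniform (N : nat) : nat -> R := fun _ => / INR N.

Lemma simplex_uniform N : (1 <= N)%nat -> simplex N (uniform N).
Proof.
  intros HN. assert (0 < INR N) by (apply lt_0_INR; lia). split.
  - intros n _. left. apply Rinv_0_lt_compat. lra.
  - unfold uniform. rewrite rsum_const. field. lra.
Qed.

Section WeaklySymmetric.

Variables (N M : nat) (Q : nat -> nat -> R).
Hypothesis N_pos : (1 <= N)%nat.
Hypothesis Q_channel : channel N M Q.
Hypothesis Q_ws : weakly_symmetric N M Q.

Let Q_nonneg n m : (n < N)%nat -> (m < M)%nat -> 0 <= Q n m.
Proof. apply Q_channel. Qed.

Let Q_row n : (n < N)%nat -> rsum M (fun m => Q n m) = 1.
Proof. apply Q_channel. Qed.

Lemma INR_M_pos : 0 < INR M.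
Proof.
  apply lt_0_INR. destruct M as [|M'] eqn:EM; [|lia].
  pose proof (Q_row 0%nat ltac:(lia)). simpl in *. lra.
Qed.

Lemma rsum_row_perm (f : R -> R) n : (n < N)%nat ->
  rsum M (fun m => f (Q n m)) = rsum M (fun m => f (Q 0%nat m)).
Proof. intros Hn. apply rsum_perm, Q_ws; lia. Qed.

Lemma colsum_ws m : (m < M)%nat -> colsum N Q m = INR N / INR M.
Proof.
  intros Hm. pose proof INR_M_pos.
  assert (Htot : rsum M (colsum N Q) = INR N).
  { unfold colsum. rewrite <- rsum_comm, (rsum_ext N _ (fun _ => 1)), rsum_const by auto.
    ring. }
  rewrite (rsum_ext M _ (fun _ => colsum N Q m)), rsum_const in Htot
    by (intros; apply Q_ws; auto).
  rewrite <- Htot. field. lra.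
Qed.

Lemma sym_bound_ws : sym_bound N M Q = ws_capacity M Q.
Proof.
  pose proof INR_M_pos. assert (0 < INR N) by (apply lt_0_INR; lia).
  unfold sym_bound, ws_capacity.
  rewrite (rsum_ext M _ (fun m => Q 0%nat m * ln (Q 0%nat m) - ln (INR N / INR M) * Q 0%nat m)).
  - rewrite rsum_minus, rsum_scal, Q_row by lia.
    unfold Rdiv. rewrite ln_mult, ln_Rinv by (try apply Rinv_0_lt_compat; lra). ring.
  - intros m Hm. rewrite guarded_mul_ln, colsum_ws, mul_ln_div by
      (first [assumption | apply Rdiv_lt_0_compat; lra | apply Q_nonneg; lia]).
    ring.
Qed.

Lemma mutual_info_uniform : mutual_info N M (uniform N) Q = ws_capacity M Q.
Proof.
  pose proof INR_M_pos. assert (0 < INR N) by (apply lt_0_INR; lia).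
  assert (Hout : forall m, (m < M)%nat ->
            rsum N (fun l => uniform N l * Q l m) = / INR M).
  { intros m Hm. unfold uniform. rewrite rsum_scal.
    change (rsum N (fun l => Q l m)) with (colsum N Q m).
    rewrite colsum_ws by auto. field. lra. }
  set (h := fun x => x * ln (x / / INR M)).
  assert (Hh : rsum M (fun m => h (Q 0%nat m)) = ws_capacity M Q).
  { unfold h, ws_capacity.
    rewrite (rsum_ext M _ (fun m => Q 0%nat m * ln (Q 0%nat m) + ln (INR M) * Q 0%nat m)).
    - rewrite rsum_plus, rsum_scal, Q_row by lia. ring.
    - intros m Hm. rewrite mul_ln_div, ln_Rinv by
        (first [lra | apply Rinv_0_lt_compat; lra | apply Q_nonneg; lia]).
      ring. }
  unfold mutual_info.
  rewrite (rsum_ext N _ (fun _ => / INR N * ws_capacity M Q)), rsum_const.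
  - field. lra.
  - intros n Hn. rewrite <- Hh, <- (rsum_row_perm h n Hn), <- rsum_scal.
    apply rsum_ext. intros m Hm. rewrite guarded_mul_ln, Hout by auto.
    unfold h, uniform. ring.
Qed.

(* All rows have the same entropy, so [ws_capacity] is also their p-average. *)
Lemma ws_capacity_mean p : rsum N p = 1 ->
  ws_capacity M Q =
  rsum N (fun n => rsum M (fun m => p n * Q n m * (ln (INR M) + ln (Q n m)))).
Proof.
  intros Hsum.
  rewrite <- (Rmult_1_r (ws_capacity M Q)), <- Hsum, <- rsum_scal.
  apply rsum_ext. intros n Hn.
  rewrite (rsum_ext M _ (fun m => p n * (ln (INR M) * Q n m + Q n m * ln (Q n m))))
    by (intros; ring).
  rewrite rsum_scal, rsum_plus, rsum_scal, Q_row, (rsum_row_perm (fun x => x * ln x)) by auto.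
  unfold ws_capacity. ring.
Qed.

Lemma mutual_info_le_ws_capacity p :
  simplex N p -> mutual_info N M p Q <= ws_capacity M Q.
Proof.
  intros [Hp Hsum]. pose proof INR_M_pos.
  rewrite (ws_capacity_mean p Hsum).
  set (r := fun m => rsum N (fun l => p l * Q l m)).
  assert (Hw : forall n m, (n < N)%nat -> (m < M)%nat -> 0 <= p n * Q n m)
    by (intros; apply Rmult_le_pos; auto).
  assert (Hr : forall n m, (n < N)%nat -> (m < M)%nat -> p n * Q n m <= r m)
    by (intros; apply (rsum_term_le N (fun l => p l * Q l m)); auto).
  assert (Hmass : rsum N (fun n => rsum M (fun m => p n * Q n m)) = 1).
  { rewrite <- Hsum. apply rsum_ext. intros n Hn. rewrite rsum_scal, Q_row by auto. ring. }
  (* Summing [w / (M r_m)] first over n gives at most 1/M for each column. *)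
  assert (Hcols : rsum N (fun n => rsum M (fun m => p n * Q n m * / (INR M * r m))) <= 1).
  { rewrite rsum_comm.
    apply Rle_trans with (rsum M (fun _ => / INR M));
      [|rewrite rsum_const; right; field; lra].
    apply rsum_le. intros m Hm.
    rewrite (rsum_ext N _ (fun l => / (INR M * r m) * (p l * Q l m))), rsum_scal by (intros; ring).
    fold (r m). destruct (Req_dec (r m) 0) as [->|Hr0].
    - rewrite Rmult_0_r. left. apply Rinv_0_lt_compat. lra.
    - right. field. lra. }
  enough (mutual_info N M p Q -
     rsum N (fun n => rsum M (fun m => p n * Q n m * (ln (INR M) + ln (Q n m)))) <=
     rsum N (fun n => rsum M (fun m => p n * Q n m * / (INR M * r m))) -
     rsum N (fun n => rsum M (fun m => p n * Q n m))) by lra.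
  unfold mutual_info. rewrite <- !rsum_minus. apply rsum_le. intros n Hn.
  rewrite <- !rsum_minus. apply rsum_le. intros m Hm.
  rewrite guarded_mul_ln.
  pose proof (gibbs_term (p n) (Q n m) (r m) (INR M)
                (Hp n Hn) (Q_nonneg n m Hn Hm) (Hr n m Hn Hm) H).
  fold (r m). lra.
Qed.

End WeaklySymmetric.

Lemma ws_capacity_seq_continuous N M Qs :
  (forall Q, Qs Q -> forall m, (m < M)%nat -> 0 <= Q 0%nat m) ->
  (1 <= N)%nat -> seq_continuous_on N M Qs (ws_capacity M).
Proof.
  intros Hnn HN Qk Q HQk HQ Hcv. unfold ws_capacity.
  apply CV_plus.
  - apply cv_const.
  - apply (rsum_cv M (fun k m => Qk k 0%nat m * ln (Qk k 0%nat m))). intros m Hm.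
    apply xlnx_cv; auto.
Qed.

Lemma ws_capacity_ge M Q :
  (forall m, (m < M)%nat -> 0 <= Q 0%nat m) -> ln (INR M) - INR M <= ws_capacity M Q.
Proof.
  intros Hnn. unfold ws_capacity.
  assert (rsum M (fun _ => -1) <= rsum M (fun m => Q 0%nat m * ln (Q 0%nat m)))
    by (apply rsum_le; intros; apply xlnx_ge_m1; auto).
  rewrite rsum_const in H. lra.
Qed.

Theorem proposition3 (N M : nat) (Qs : (nat -> nat -> R) -> Prop) :
  (1 <= N)%nat ->
  (exists Q, Qs Q) ->
  compact_set N M Qs ->
  convex_set Qs ->
  (forall Q, Qs Q -> channel N M Q /\ weakly_symmetric N M Q) ->
  exists Qstar, Qs Qstar /\
    (forall Q, Qs Q -> sym_bound N M Qstar <= sym_bound N M Q) /\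
    is_sup (robust_values N M Qs) (sym_bound N M Qstar).
Proof.
  intros HN Hne Hcomp _ HQs.
  assert (Hrow0 : forall Q, Qs Q -> forall m, (m < M)%nat -> 0 <= Q 0%nat m)
    by (intros Q HQ m Hm; apply (HQs Q HQ); lia).
  destruct (compact_min_attained N M Qs (ws_capacity M) Hne Hcomp
              (ws_capacity_seq_continuous N M Qs Hrow0 HN))
    as [Qstar [HQstar Hmin]].
  { exists (ln (INR M) - INR M). intros Q HQ. apply ws_capacity_ge, Hrow0, HQ. }
  assert (Hsym : forall Q, Qs Q -> sym_bound N M Q = ws_capacity M Q)
    by (intros Q HQ; destruct (HQs Q HQ); apply sym_bound_ws; auto).
  assert (Hunif : forall Q, Qs Q -> mutual_info N M (uniform N) Q = ws_capacity M Q)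
    by (intros Q HQ; destruct (HQs Q HQ); apply mutual_info_uniform; auto).
  exists Qstar. rewrite Hsym by exact HQstar. split; [exact HQstar|split].
  - intros Q HQ. rewrite Hsym by exact HQ. exact (Hmin Q HQ).
  - split.
    + intros c [p [Hp [Hlow _]]].
      apply Rle_trans with (mutual_info N M p Qstar).
      * apply Hlow. exists Qstar. auto.
      * destruct (HQs Qstar HQstar). apply mutual_info_le_ws_capacity; auto.
    + intros z Hz. apply Hz. exists (uniform N). split; [apply simplex_uniform, HN|split].
      * intros y [Q [HQ ->]]. rewrite Hunif by exact HQ. exact (Hmin Q HQ).
      * intros w Hw. rewrite <- (Hunif Qstar HQstar). apply Hw. exists Qstar. auto.
Qed.
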